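(* Let $A$ be a setoid and $B$ a setoid family over $A$. There is an extensional function $\mathsf{us}:W\Rightarrow P_B\,W$ such that $\mathsf s\circ\mathsf{us}\approx \mathrm{id}_W$ and $\mathsf{us}\circ\mathsf s\approx\mathrm{id}_{P_B W}$.
   Context: Setting: intensional Martin-Löf type theory with $\Pi$-types, record types and a universe $\mathsf U$ closed under $\Pi$ and containing intensional $\Sigma$-types, identity types, unit type, W-types and dependent W-types; propositions-as-types. For a W-type $\mathsf W(A_0,B_0)$ with constructor $\mathsf{sup}$, $\mathsf n$ and $\mathsf b$ are the node and branch functions ($\mathsf n(\mathsf{sup}\,a\,f)\equiv a$, $\mathsf b(\mathsf{sup}\,a\,f)\equiv f$). $\mathsf{DW}_{I,X,Y,d}:I\to\mathsf U$ denotes the dependent W-type (inductive family with constructor $\mathsf{dsup}\,i\,x\,f:\mathsf{DW}\,i$ for $x:X\,i$, $f:\prod_{y:Y\,i\,x}\mathsf{DW}(d\,i\,x\,y)$). A setoid $X$ is a type $X_0:\mathsf U$ with relation $\approx_X$ and terms witnessing reflexivity, symmetry, transitivity; $x:X$ means $x:X_0$. An extensional function $f:X\Rightarrow Y$ is $f_0:X_0\to Y_0$ with a proof that it preserves $\approx$; $X\Rightarrow Y$ is a setoid with pointwise equality $f\approx g:=\prod_xf_0x\approx g_0x$; $\circ$ is composition. A setoid family $B$ over a setoid $A$ gives setoids $B\,a$ and transports $B_\alpha:B\,a\Rightarrow B\,a'$ for $\alpha:a\approx_Aa'$, functorial up to $\approx$ and with $B_\alpha\approx B_{\alpha'}$ for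 all $\alpha,\alpha'$. Write $b\approx_\alpha b'$ for $B_\alpha b\approx b'$. $P_BX$ is the setoid with underlying type $\sum_{a:A}(B\,a\Rightarrow X)$ and $(a,k)\approx(a',k'):=\sum_{\alpha:a\approx a'}k\approx k'\circ B_\alpha$. $W$: with $A_0,B_0\,a$ the underlying types of $A,B\,a$ and $\mathsf W:=\mathsf W(A_0,B_0)$, let $\approx^Bw\,w':=\mathsf{DW}_{I,X,Y,d}(w,w')$ with $I:=\mathsf W\times\mathsf W$, $X(w,w'):=\mathsf nw\approx_A\mathsf nw'$, $Y(w,w')\alpha:=\sum_{b,b'}b\approx_\alpha b'$, $d(w,w')\alpha(b,b',\beta):=(\mathsf b\,w\,b,\mathsf b\,w'\,b')$. $W$ is the setoid with underlying type $\sum_{w:\mathsf W}\approx^Bw\,w$ and $(w,\_)\approx_W(w',\_):=\approx^Bw\,w'$. The extensional function $\mathsf s:P_BW\Rightarrow W$ sends $(a,f)$ to the (extensional) tree $\mathsf{sup}\,a\,f_0$, where $f_0$ is the underlying function of $f$ followed by first projection. *)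

Record setoid : Type := Setoid {
  carrier : Type;
  eqv : carrier -> carrier -> Type;
  eqv_refl : forall x, eqv x x;
  eqv_sym : forall x y, eqv x y -> eqv y x;
  eqv_trans : forall x y z, eqv x y -> eqv y z -> eqv x z
}.
Arguments eqv {s} _ _.
Arguments eqv_refl {s} _.
Arguments eqv_sym {s _ _} _.
Arguments eqv_trans {s _ _ _} _ _.
Notation "x ≈ y" := (eqv x y) (at level 70).

Record extfun (X Y : setoid) : Type := ExtFun {
  ap : carrier X -> carrier Y;
  ap_ext : forall x x', x ≈ x' -> ap x ≈ ap x'
}.
Arguments ap {X Y} _ _.
Arguments ap_ext {X Y} _ {x x'} _.
Coercion ap : extfun >-> Funclass.

Definition fun_setoid (X Y : setoid) : setoid.
Proof.
  refine (Setoid (extfun X Y) (fun f g => forall x, f x ≈ g x) _ _ _).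
  - intros f x; apply eqv_refl.
  - intros f g H x; apply eqv_sym, H.
  - intros f g h H1 H2 x; exact (eqv_trans (H1 x) (H2 x)).
Defined.
Notation "X ⇒ Y" := (fun_setoid X Y) (at level 55, right associativity).

Definition idf (X : setoid) : extfun X X := ExtFun X X (fun x => x) (fun _ _ e => e).

Definition compf {X Y Z : setoid} (g : extfun Y Z) (f : extfun X Y) : extfun X Z :=
  ExtFun X Z (fun x => g (f x)) (fun _ _ e => ap_ext g (ap_ext f e)).
Notation "g ∘ f" := (compf g f) (at level 40, left associativity).

Record setoid_family (A : setoid) : Type := SetoidFamily {
  fam : carrier A -> setoid;
  tr : forall a a' : carrier A, a ≈ a' -> extfun (fam a) (fam a');
  tr_id : forall a (α : a ≈ a) (b : carrier (fam a)), tr a a α b ≈ b;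
  tr_comp : forall a a' a'' (α : a ≈ a') (α' : a' ≈ a'') (b : carrier (fam a)),
      tr a' a'' α' (tr a a' α b) ≈ tr a a'' (eqv_trans α α') b;
  tr_irr : forall a a' (α α' : a ≈ a') (b : carrier (fam a)), tr a a' α b ≈ tr a a' α' b
}.
Arguments fam {A} _ _.
Arguments tr {A} _ {a a'} _.
Coercion fam : setoid_family >-> Funclass.

Section PB.
Context {A : setoid} (B : setoid_family A).

Lemma tr_inv a a' (α : a ≈ a') (b' : carrier (B a')) :
  tr B α (tr B (eqv_sym α) b') ≈ b'.
Proof.
  eapply eqv_trans; [apply tr_comp|apply tr_id].
Qed.

Lemma tr_inv' a a' (α : a ≈ a') (b : carrier (B a)) :
  tr B (eqv_sym α) (tr B α b) ≈ b.
Proof.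
  eapply eqv_trans; [apply tr_comp|apply tr_id].
Qed.

Definition PB_eqv (X : setoid) (p q : {a : carrier A & extfun (B a) X}) : Type :=
  {α : projT1 p ≈ projT1 q & forall b, projT2 p b ≈ projT2 q (tr B α b)}.

Definition P_B (X : setoid) : setoid.
Proof.
  refine (Setoid {a : carrier A & extfun (B a) X} (PB_eqv X) _ _ _).
  - intros [a k]. exists (eqv_refl a). intros b; simpl.
    apply ap_ext, eqv_sym, tr_id.
  - intros [a k] [a' k'] [α H]; simpl in *.
    exists (eqv_sym α). intros b'; simpl.
    eapply eqv_trans; [apply ap_ext, eqv_sym, (tr_inv _ _ α)|].
    apply eqv_sym, H.
  - intros [a k] [a' k'] [a'' k''] [α H] [α' H']; simpl in *.
    exists (eqv_trans α α'). intros b; simpl.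
    eapply eqv_trans; [apply H|]. eapply eqv_trans; [apply H'|].
    apply ap_ext, tr_comp.
Defined.
End PB.

Inductive Wt (A0 : Type) (B0 : A0 -> Type) : Type :=
  sup : forall a : A0, (B0 a -> Wt A0 B0) -> Wt A0 B0.
Arguments sup {A0 B0} a f.

Definition nd {A0 B0} (w : Wt A0 B0) : A0 := match w with sup a _ => a end.
Definition br {A0 B0} (w : Wt A0 B0) : B0 (nd w) -> Wt A0 B0 :=
  match w with sup _ f => f end.

Inductive DW (I : Type) (X : I -> Type) (Y : forall i, X i -> Type)
    (d : forall i (x : X i), Y i x -> I) : I -> Type :=
  dsup : forall i (x : X i), (forall y : Y i x, DW I X Y d (d i x y)) -> DW I X Y d i.
Arguments dsup {I X Y d} i x f.

Section WSetoid.
Context {A : setoid} (B : setoid_family A).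

Definition Wt_B := Wt (carrier A) (fun a => carrier (B a)).

Definition WI := (Wt_B * Wt_B)%type.
Definition WX (p : WI) : Type := nd (fst p) ≈ nd (snd p).
Definition WY (p : WI) (α : WX p) : Type :=
  {b : carrier (B (nd (fst p))) & {b' : carrier (B (nd (snd p))) & tr B α b ≈ b'}}.
Definition Wd (p : WI) (α : WX p) (y : WY p α) : WI :=
  (br (fst p) (projT1 y), br (snd p) (projT1 (projT2 y))).

Definition approxB (w w' : Wt_B) : Type := DW WI WX WY Wd (w, w').

Lemma approxB_sym_gen (p : WI) : DW WI WX WY Wd p -> approxB (snd p) (fst p).
Proof.
  intro H; induction H as [[w w'] α f IH]; simpl in *.
  refine (dsup (w', w) (eqv_sym α) _).
  intros [b' [b β]]; simpl.
  refine (IH (existT _ b (existT _ b' _))).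
  unfold WX in α; simpl in *.
  eapply eqv_trans; [apply ap_ext, (eqv_sym β)|]. apply tr_inv.
Qed.

Lemma approxB_sym w w' : approxB w w' -> approxB w' w.
Proof. exact (approxB_sym_gen (w, w')). Qed.

Lemma approxB_trans_gen (p : WI) : DW WI WX WY Wd p ->
  forall q : WI, DW WI WX WY Wd q -> snd p = fst q -> approxB (fst p) (snd q).
Proof.
  intro H; induction H as [[w w'] α f IH]; simpl in *.
  intros q H2; destruct H2 as [[v w''] α' g]; simpl in *.
  intro e; subst v.
  refine (dsup (w, w'') (eqv_trans (α : WX (w, w')) (α' : WX (w', w''))) _).
  intros [b [b'' β]]; simpl in *.
  refine (IH (existT _ b (existT _ (tr B α b) (eqv_refl _))) _
             (g (existT _ (tr B α b) (existT _ b'' _))) eq_refl).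
  simpl. eapply eqv_trans; [apply tr_comp|exact β].
Qed.

Lemma approxB_trans w w' w'' : approxB w w' -> approxB w' w'' -> approxB w w''.
Proof. intros H1 H2; exact (approxB_trans_gen (w, w') H1 (w', w'') H2 eq_refl). Qed.

Definition W : setoid.
Proof.
  refine (Setoid {w : Wt_B & approxB w w} (fun u v => approxB (projT1 u) (projT1 v)) _ _ _).
  - intros [w r]; exact r.
  - intros u v; apply approxB_sym.
  - intros u v z; apply approxB_trans.
Defined.

Definition s_fun (p : carrier (P_B B W)) : carrier W.
Proof.
  destruct p as [a f].
  exists (sup a (fun b => projT1 (f b))).
  refine (dsup (sup a (fun b => projT1 (f b)), sup a (fun b => projT1 (f b)))
               (eqv_refl a) _).
  intros [b [b' β]]; simpl.
  change (f b ≈ f b'). apply ap_ext.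
  eapply eqv_trans; [apply eqv_sym, (tr_id _ B a (eqv_refl a))|exact β].
Defined.

Definition s : extfun (P_B B W) W.
Proof.
  refine (ExtFun (P_B B W) W s_fun _).
  intros [a f] [a' f'] [α H]; simpl in *.
  refine (dsup (sup a (fun b => projT1 (f b)), sup a' (fun b => projT1 (f' b))) α _).
  intros [b [b' β]]; simpl.
  change (f b ≈ f' b'). eapply eqv_trans; [apply H|]. apply ap_ext; exact β.
Defined.
End WSetoid.


(* A proof of [w ≈ w'] in [W] is itself a tree: its root is a proof of [nd w ≈ nd w'] and its
   branches relate the immediate subtrees of [w] and [w'] along related branch labels. Reading
   off these two components sends [u : W] to its root label together with the extensional
   family of its immediate subtrees; [s] reassembles exactly this pair, so both composites are
   the identity up to reflexivity proofs. *)

Section DependentWTypes.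
Context {I : Type} {X : I -> Type} {Y : forall i, X i -> Type}
  {d : forall i (x : X i), Y i x -> I}.

Definition dw_node {i : I} (t : DW I X Y d i) : X i :=
  match t with dsup _ x _ => x end.

Definition dw_branch {i : I} (t : DW I X Y d i) :
  forall y : Y i (dw_node t), DW I X Y d (d i (dw_node t) y) :=
  match t with dsup _ _ f => f end.

End DependentWTypes.

Section Unsup.
Context {A : setoid} (B : setoid_family A).

Definition approxB_nd {w w' : Wt_B B} (r : approxB B w w') : nd w ≈ nd w' := dw_node r.

Definition approxB_br {w w' : Wt_B B} (r : approxB B w w')
    (b : carrier (B (nd w))) (b' : carrier (B (nd w'))) (β : tr B (approxB_nd r) b ≈ b') :
  approxB B (br w b) (br w' b') :=
  dw_branch r (existT _ b (existT _ b' β)).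

Definition subtree (u : carrier (W B)) (b : carrier (B (nd (projT1 u)))) : carrier (W B) :=
  existT (fun w => approxB B w w) (br (projT1 u) b) (approxB_br (projT2 u) b b (tr_id _ B _ _ b)).

Definition subtrees (u : carrier (W B)) : extfun (B (nd (projT1 u))) (W B) :=
  ExtFun _ (W B) (subtree u)
    (fun b b' e => approxB_br (projT2 u) b b' (eqv_trans (tr_id _ B _ _ b) e)).

Definition us : extfun (W B) (P_B B (W B)).
Proof.
  refine (ExtFun (W B) (P_B B (W B)) (fun u => existT _ (nd (projT1 u)) (subtrees u)) _).
  intros u u' r.
  exists (approxB_nd r).
  intros b; exact (approxB_br r b _ (eqv_refl _)).
Defined.

Lemma s_us : @eqv (W B ⇒ W B) (s B ∘ us) (idf (W B)).
Proof. intros [[a f] r]; exact r. Qed.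

Lemma us_s : @eqv (P_B B (W B) ⇒ P_B B (W B)) (us ∘ s B) (idf (P_B B (W B))).
Proof.
  intros [a f]; exists (eqv_refl a); intros b.
  change (f b ≈ f (tr B (eqv_refl a) b)).
  apply ap_ext, eqv_sym, tr_id.
Qed.

End Unsup.

Theorem proposition3p6 (A : setoid) (B : setoid_family A) :
  {us : extfun (W B) (P_B B (W B)) &
     (@eqv (W B ⇒ W B) (s B ∘ us) (idf (W B)) *
      @eqv (P_B B (W B) ⇒ P_B B (W B)) (us ∘ s B) (idf (P_B B (W B))))%type}.
Proof. exact (existT _ (us B) (s_us B, us_s B)). Qed.
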